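(* Let $\kappa$ be a finite field of characteristic $p \neq 2$, let $\chi$ be the quadratic character of $\kappa^\times$, and let $\mu$ be the Möbius function on non-zero elements of $\kappa[u]$. Let $a, b \in \kappa^\times$ and let $g_1, g_2 \in \kappa[u]$ be relatively prime (not both zero), using the convention $\deg 0 = -\infty$. Then $$\mu(a g_1^{2p} + b u g_2^{2p}) = \begin{cases} -\chi(-1)^{\deg g_2} & \text{if } \deg g_1 \le \deg g_2,\\ \chi(-1)^{\deg g_1} & \text{if } \deg g_1 > \deg g_2.\end{cases}$$
   Context: For non-zero $P \in \kappa[u]$, $\mu(P) = 0$ if $P$ is divisible by the square of a non-constant polynomial, and otherwise $\mu(P) = (-1)^r$ where $r$ is the number of (monic) irreducible factors of $P$; $\mu$ of a non-zero constant is $1$. *)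

From HB Require Import structures.
From mathcomp Require Import all_boot all_order all_algebra.
From Stdlib Require Import ClassicalEpsilon.
Set Implicit Arguments. Unset Strict Implicit. Unset Printing Implicit Defensive.
Import Order.TTheory GRing.Theory Num.Theory.
Local Open Scope ring_scope.

Definition irreducibleb (F : fieldType) (q : {poly F}) : bool :=
  if excluded_middle_informative (irreducible_poly q) then true else false.

(* P is divisible by the square of a non-constant polynomial.
   Any such divisor d of a nonzero P satisfies size d <= size P, so it is
   enough to range over the finite type {poly_(size P) F}. *)
Definition has_square_factor (F : finFieldType) (P : {poly F}) : bool :=
  [exists d : {poly_(size P) F}, (1 < size (d : {poly F}))%N && ((d : {poly F}) ^+ 2 %| P)].

(* Number of monic irreducible factors of P (i.e. distinct monic irreducible
   divisors; for squarefree P this is the number of irreducible factors). *)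
Definition nb_irr_factors (F : finFieldType) (P : {poly F}) : nat :=
  #|[pred q : {poly_(size P) F} | [&& (q : {poly F}) \is monic,
       irreducibleb (q : {poly F}) & (q : {poly F}) %| P]]|.

(* Möbius function on nonzero polynomials of F[u]; value at 0 is irrelevant (set to 0). *)
Definition mobius (F : finFieldType) (P : {poly F}) : int :=
  if P == 0 then 0
  else if has_square_factor P then 0
  else (-1) ^+ nb_irr_factors P.

Definition qchar (F : finFieldType) (x : F) : int :=
  if x == 0 then 0
  else if [exists y : F, y ^+ 2 == x] then 1 else -1.

(* Since p divides 2p, the derivative of f = a g1^(2p) + b u g2^(2p) is
   b (g2^p)^2, which is coprime to f; hence f is squarefree and
   mu(f) = (-1)^r, r the number of irreducible factors of f.  Following
   Stickelberger, the Frobenius x |-> x^q permutes the n distinct roots of f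
   in a splitting field, with one cycle per irreducible factor, so its
   signature is (-1)^(n - r); it is also the factor by which the Frobenius
   multiplies the Vandermonde product delta of the roots.  Thus (-1)^r is
   (-1)^n times the quadratic character of delta^2, which lies in kappa.
   Now delta^2 = (-1)^(n(n-1)/2) prod_i f'(r_i) / lc(f)^n
             = (-1)^(n(n-1)/2) (b / lc(f))^n (prod_i g2(r_i)^p)^2,
   the last factor is a nonzero square of kappa, and (b / lc(f))^n is a
   square as well: either lc(f) = b lc(g2)^(2p), or n = deg f is even.
   What remains is the parity of n and of n(n-1)/2. *)

From Pilot Require Import Defs.
From HB Require Import structures.
From mathcomp Require Import all_boot all_order all_algebra all_field perm.
From Stdlib Require Import ClassicalEpsilon.
Set Implicit Arguments. Unset Strict Implicit. Unset Printing Implicit Defensive.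
Import Order.TTheory GRing.Theory Num.Theory.
Local Open Scope ring_scope.

Lemma card_ord_lt n (j : 'I_n) : #|[pred i : 'I_n | (i < j)%N]| = j.
Proof.
rewrite -sum1_card (big_ord_narrow_cond (P := predT) (ltnW (ltn_ord j))).
by rewrite sum1_card card_ord.
Qed.

Lemma odd_bin2 n : odd 'C(n, 2) = odd n./2.
Proof.
rewrite -{1}(odd_double_half n) bin2; case: (odd n); set m := n./2.
  by rewrite /= -doubleMr doubleK oddM oddD odd_double.
by case: m => // m; rewrite -doubleMl doubleK oddM /= odd_double andbT.
Qed.

Lemma sqr_prod_sub_lt (R : comPzRingType) n (x : 'I_n -> R) :
  (\prod_(i < n) \prod_(j < n | (i < j)%N) (x j - x i)) ^+ 2 =
  (-1) ^+ 'C(n, 2) * \prod_(i < n) \prod_(j < n | j != i) (x i - x j).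
Proof.
set V := \prod_(i < n) _.
have V_gt : \prod_(i < n) \prod_(j < n | (j < i)%N) (x i - x j) = V.
  by rewrite /V (exchange_big_dep xpredT).
have V_lt : \prod_(i < n) \prod_(j < n | (i < j)%N) (x i - x j) = (-1) ^+ 'C(n, 2) * V.
  rewrite (exchange_big_dep xpredT) //= -V_gt -bin2_sum big_mkord -prodrXr -big_split /=.
  apply: eq_bigr => j _; rewrite -[X in _ ^+ X](card_ord_lt j) -prodrN.
  by apply: eq_bigr => i _; rewrite opprB.
have -> : \prod_(i < n) \prod_(j < n | j != i) (x i - x j) =
          \prod_(i < n) \prod_(j < n | (j < i)%N) (x i - x j) *
          \prod_(i < n) \prod_(j < n | (i < j)%N) (x i - x j).
  rewrite -big_split /=; apply: eq_bigr => i _.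
  rewrite (bigID (fun j : 'I_n => (j < i)%N)) /=; congr (_ * _); apply: eq_bigl => j.
    by rewrite -val_eqE /=; case: ltngtP.
  by rewrite -val_eqE /=; case: ltngtP.
by rewrite V_gt V_lt (mulrCA V) !mulrA -expr2 sqrr_sign mul1r expr2.
Qed.

Lemma horner_deriv_prod_XsubC (R : comNzRingType) n (x : 'I_n -> R) i :
  (\prod_(j < n) ('X - (x j)%:P))^`().[x i] = \prod_(j < n | j != i) (x i - x j).
Proof.
rewrite (bigD1 i) //= derivM derivXsubC mul1r hornerD hornerM hornerXsubC subrr mul0r.
by rewrite addr0 horner_prod; apply: eq_bigr => j _; rewrite hornerXsubC.
Qed.

Lemma dvdp_prod_XsubC_root (K : fieldType) (d : {poly K}) (s : seq K) :
  (1 < size d)%N -> d %| \prod_(z <- s) ('X - z%:P) -> exists2 z, z \in s & root d z.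
Proof.
move=> d_gt1 /dvdp_prod_XsubC[m]; case Dms: (mask m s) => [|z t] d_eq.
  by move: d_gt1; rewrite (eqp_size d_eq) big_nil size_poly1.
exists z; first by apply: (mem_mask (m := m)); rewrite Dms mem_head.
by rewrite (eqp_root d_eq) root_prod_XsubC mem_head.
Qed.

Lemma size_scale_exp (R : idomainType) (c : R) (q : {poly R}) k :
  c != 0 -> q != 0 -> size (c *: q ^+ k) = ((size q).-1 * k).+1.
Proof.
move=> c_neq0 q_neq0; rewrite size_scale // -size_exp prednK //.
by rewrite size_poly_gt0 expf_neq0.
Qed.

Lemma irreduciblebP (K : fieldType) (q : {poly K}) :
  reflect (irreducible_poly q) (Defs.irreducibleb q).
Proof. by rewrite /Defs.irreducibleb; case: excluded_middle_informative; constructor. Qed.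

Lemma mobius_separable (F : finFieldType) (f : {poly F}) :
  separable_poly f -> mobius f = (-1) ^+ nb_irr_factors f.
Proof.
move=> sep_f; rewrite /mobius (negPf (separable_poly_neq0 sep_f)).
case: ifP => // /existsP[d /andP[d_gt1 d_dvd]].
by rewrite (separable_nosquare sep_f (_ : 1 < 2)%N) // neq_ltn d_gt1 orbT in d_dvd.
Qed.

Lemma qchar_sign_nonsquare (F : finFieldType) (x : F) :
  x != 0 -> qchar x = (-1) ^+ ~~ [exists y : F, y ^+ 2 == x].
Proof. by rewrite /qchar => /negPf ->; case: ifP. Qed.

Lemma qchar_mulr_sqr (F : finFieldType) (e u : F) : u != 0 -> qchar (e * u ^+ 2) = qchar e.
Proof.
move=> u_neq0; rewrite /qchar mulf_eq0 sqrf_eq0 (negPf u_neq0) orbF.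
have [// | e_neq0] := eqVneq e 0; congr (if _ then _ else _).
apply/existsP/existsP => [[y /eqP Dy] | [y /eqP <-]]; last by exists (y * u); rewrite exprMn.
by exists (y / u); rewrite expr_div_n Dy mulfK ?sqrf_eq0.
Qed.

Lemma qchar_sign (F : finFieldType) k : qchar ((-1) ^+ k : F) = qchar (-1 : F) ^+ k.
Proof.
have qchar_sqr : qchar (-1 : F) ^+ 2 = 1.
  by rewrite /qchar oppr_eq0 oner_eq0; case: ifP; rewrite ?sqrrN expr1n.
rewrite -(odd_double_half k) !exprD -mul2n !exprM sqrrN expr1n qchar_sqr !expr1n !mulr1.
case: (odd k); rewrite ?expr1 ?expr0 //.
by rewrite /qchar oner_eq0; case: existsP => // -[]; exists 1; rewrite expr1n.
Qed.

Lemma qchar_sign_muln_odd (F : finFieldType) d p :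
  odd p -> qchar ((-1) ^+ (d * p) : F) = qchar (-1 : F) ^+ d.
Proof. by move=> p_odd; rewrite -signr_odd oddM p_odd andbT signr_odd qchar_sign. Qed.

Lemma qchar_bin2_sqr (F : finFieldType) n (s : F) :
  s != 0 -> qchar ((-1) ^+ 'C(n, 2) * s ^+ 2) = qchar ((-1) ^+ n./2 : F).
Proof. by move=> s_neq0; rewrite qchar_mulr_sqr // -signr_odd odd_bin2 signr_odd. Qed.

Section Frobenius.
Variables (F : finFieldType) (L : fieldExtType F).
Local Notation "p ^%:A" := (map_poly (in_alg L) p) (format "p ^%:A").

Definition frob (x : L) : L := x ^+ #|F|.

Fact frob_is_zmod_morphism : zmod_morphism frob.
Proof.
rewrite /frob => x y.
have [p _ pcharFp] := finPcharP F; rewrite (card_pprimeChar pcharFp).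
elim: (logn _ _) => // n IHn; rewrite expnSr !exprM {}IHn.
by rewrite -(pchar_lalg L) in pcharFp; rewrite -pFrobenius_autE rmorphB.
Qed.

Fact frob_is_monoid_morphism : monoid_morphism frob.
Proof. by rewrite /frob; split=> [|x y]; rewrite ?exprMn ?expr1n. Qed.

HB.instance Definition _ := GRing.isZmodMorphism.Build L L frob frob_is_zmod_morphism.
HB.instance Definition _ := GRing.isMonoidMorphism.Build L L frob frob_is_monoid_morphism.

Lemma frob_fixed x : (frob x == x) = (x \in 1%VS).
Proof. by rewrite Fermat's_little_theorem dimv1 expn1. Qed.

Lemma frob_alg a : frob a%:A = a%:A.
Proof. by apply/eqP; rewrite frob_fixed rpredZ ?mem1v. Qed.

Lemma map_frob_alg (q : {poly F}) : map_poly frob q^%:A = q^%:A.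
Proof. by rewrite -map_poly_comp; apply: eq_map_poly => a /=; rewrite frob_alg. Qed.

Lemma root_frob (q : {poly F}) x : root q^%:A x -> root q^%:A (frob x).
Proof. by move=> /eqP qx0; rewrite /root -{1}map_frob_alg horner_map qx0 rmorph0. Qed.

Lemma frob_fixed_sqrt (x : L) (e : F) :
  x ^+ 2 = e%:A -> (frob x == x) = [exists y : F, y ^+ 2 == e].
Proof.
move=> Dx; apply/idP/existsP => [| [y /eqP Dy]].
  rewrite frob_fixed => /vlineP[t Dt]; exists t.
  by move: Dx; rewrite Dt -!in_algE -rmorphXn => /fmorph_inj ->.
have : x ^+ 2 == (y%:A) ^+ 2 by rewrite Dx -Dy -in_algE rmorphXn.
by rewrite eqf_sqr => /orP[] /eqP ->; rewrite frob_fixed ?rpredN rpredZ ?mem1v.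
Qed.

Definition alg_inv (x : L) : F := odflt 0 [pick a : F | a%:A == x].

Lemma alg_invK x : x \in 1%VS -> (alg_inv x)%:A = x.
Proof.
case/vlineP=> a ->; rewrite /alg_inv; case: pickP => [b /eqP // | /(_ a)].
by rewrite eqxx.
Qed.

Lemma map_alg_invK (P : {poly L}) : map_poly frob P = P -> (map_poly alg_inv P)^%:A = P.
Proof.
move=> frobP; rewrite -map_poly_comp_id0 ?rmorph0 //.
apply: map_poly_id => _ /(nthP 0)[k _ <-] /=.
by rewrite alg_invK // -frob_fixed -coef_map frobP.
Qed.

End Frobenius.
Arguments frob {F L}.

Section FrobeniusPermutation.
Variables (F : finFieldType) (L : fieldExtType F) (f : {poly F}) (n : nat) (r : 'I_n -> L).
Local Notation "p ^%:A" := (map_poly (in_alg L) p) (format "p ^%:A").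
Hypotheses (f_neq0 : f != 0) (r_inj : injective r).
Hypothesis f_split : f^%:A = (lead_coef f)%:A *: \prod_(i < n) ('X - (r i)%:P).

Lemma root_split x : root f^%:A x = (x \in codom r).
Proof.
rewrite f_split rootZ ?scaler_eq0 ?oner_eq0 ?lead_coef_eq0 ?orbF //.
have -> : \prod_(i < n) ('X - (r i)%:P) = \prod_(z <- codom r) ('X - z%:P).
  by rewrite big_image.
by rewrite root_prod_XsubC.
Qed.

Definition frob_perm_fun i := odflt i [pick j | r j == frob (r i)].

Lemma r_frob_perm_fun i : r (frob_perm_fun i) = frob (r i).
Proof.
have /codomP[j rj] : frob (r i) \in codom r.
  by rewrite -root_split root_frob // root_split codom_f.
by rewrite /frob_perm_fun; case: pickP => [k /eqP // | /(_ j)]; rewrite rj eqxx.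
Qed.

Lemma frob_perm_fun_inj : injective frob_perm_fun.
Proof. by move=> i j /(congr1 r); rewrite !r_frob_perm_fun => /fmorph_inj /r_inj. Qed.

Definition frob_perm : {perm 'I_n} := perm frob_perm_fun_inj.
Local Notation pi := frob_perm.

Lemma r_frob_perm i : r (pi i) = frob (r i).
Proof. by rewrite permE r_frob_perm_fun. Qed.

Lemma root_frob_permX (d : {poly F}) i k :
  root d^%:A (r i) -> root d^%:A (r ((pi ^+ k)%g i)).
Proof.
move=> di; elim: k => [|k IHk]; first by rewrite expg0 perm1.
by rewrite expgSr permM r_frob_perm root_frob.
Qed.

Definition orbit_poly (O : {set 'I_n}) := \prod_(l in O) ('X - (r l)%:P).

Lemma orbit_polyE O : orbit_poly O = \prod_(z <- [seq r l | l in O]) ('X - z%:P).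
Proof. by rewrite big_image. Qed.

Lemma frob_orbit_poly i : map_poly frob (orbit_poly (porbit pi i)) = orbit_poly (porbit pi i).
Proof.
rewrite /orbit_poly rmorph_prod /=; under eq_bigr do rewrite map_polyXsubC /= -r_frob_perm.
rewrite [RHS](reindex_inj (@perm_inj _ pi)); apply: eq_bigl => l.
by rewrite !(porbit_sym pi _ i) -(porbit_perm pi 1 l) expg1.
Qed.

Definition orbit_minpoly O : {poly F} := map_poly (@alg_inv F L) (orbit_poly O).

Lemma orbit_minpolyK i : (orbit_minpoly (porbit pi i))^%:A = orbit_poly (porbit pi i).
Proof. exact/map_alg_invK/frob_orbit_poly. Qed.

Lemma orbit_minpoly_monic i : orbit_minpoly (porbit pi i) \is monic.
Proof. by rewrite -(map_monic (in_alg L)) orbit_minpolyK monic_prod_XsubC. Qed.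

Lemma size_orbit_minpoly i : size (orbit_minpoly (porbit pi i)) = #|porbit pi i|.+1.
Proof.
rewrite -(size_map_poly (in_alg L)) orbit_minpolyK orbit_polyE size_prod_XsubC.
by rewrite size_image.
Qed.

Lemma size_orbit_minpoly_gt1 i : (1 < size (orbit_minpoly (porbit pi i)))%N.
Proof. by rewrite size_orbit_minpoly ltnS card_gt0; apply/set0Pn; exists i; apply: porbit_id. Qed.

Lemma orbit_minpoly_dvdp d i : root d^%:A (r i) -> orbit_minpoly (porbit pi i) %| d.
Proof.
move=> di; rewrite -(dvdp_map (in_alg L)) orbit_minpolyK orbit_polyE.
apply: uniq_roots_dvdp; last by rewrite uniq_rootsE map_inj_uniq ?enum_uniq.
by apply/allP => _ /imageP[l /porbitP[k ->] ->]; apply: root_frob_permX.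
Qed.

Lemma orbit_minpoly_dvdp_f i : orbit_minpoly (porbit pi i) %| f.
Proof. by apply: orbit_minpoly_dvdp; rewrite root_split codom_f. Qed.

Lemma orbit_minpoly_irr i : irreducible_poly (orbit_minpoly (porbit pi i)).
Proof.
split=> [|d d_neq1 d_dvd]; first exact: size_orbit_minpoly_gt1.
have d_gt1 : (1 < size d)%N.
  rewrite ltn_neqAle eq_sym d_neq1 lt0n size_poly_eq0.
  by apply: contraTneq d_dvd => ->; rewrite dvd0p -size_poly_eq0 size_orbit_minpoly.
have : d^%:A %| orbit_poly (porbit pi i) by rewrite -orbit_minpolyK dvdp_map.
rewrite orbit_polyE => /dvdp_prod_XsubC_root; rewrite size_map_poly.
case/(_ d_gt1) => _ /imageP[l il ->] /orbit_minpoly_dvdp.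
have /eqP orbit_li : porbit pi l == porbit pi i by rewrite eq_porbit_mem.
by rewrite orbit_li /eqp d_dvd.
Qed.

Lemma irreducible_dvdp_root (q : {poly F}) :
  irreducible_poly q -> q %| f -> exists i, root q^%:A (r i).
Proof.
move=> q_irr q_dvd; have : q^%:A %| \prod_(z <- codom r) ('X - z%:P).
  rewrite big_image -(dvdpZr _ _ (_ : (lead_coef f)%:A != 0)) -?f_split ?dvdp_map //.
  by rewrite scaler_eq0 oner_eq0 orbF lead_coef_eq0.
case/dvdp_prod_XsubC_root => [|_ /codomP[i ->] qi]; last by exists i.
by rewrite size_map_poly; case: q_irr.
Qed.

Lemma orbit_minpoly_unique (q : {poly F}) i : q \is monic -> irreducible_poly q ->
  root q^%:A (r i) -> q = orbit_minpoly (porbit pi i).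
Proof.
move=> q_monic q_irr qi; apply/eqP; rewrite -eqp_monic ?orbit_minpoly_monic // eqp_sym.
apply: q_irr (orbit_minpoly_dvdp qi).
by rewrite neq_ltn size_orbit_minpoly_gt1 orbT.
Qed.

Lemma card_porbits_frob_perm : #|porbits pi| = nb_irr_factors f.
Proof.
pose factor O : {poly_(size f) F} := insubd 0 (orbit_minpoly O).
have factorE i : val (factor (porbit pi i)) = orbit_minpoly (porbit pi i).
  by rewrite insubdK //; exact: dvdp_leq f_neq0 (orbit_minpoly_dvdp_f i).
have factor_inj : {in porbits pi &, injective factor}.
  move=> _ _ /imsetP[i _ ->] /imsetP[j _ ->] /(congr1 val); rewrite !factorE.
  move/(congr1 (map_poly (in_alg L))); rewrite !orbit_minpolyK !orbit_polyE => eq_ij.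
  apply/setP => l; have := congr1 (root^~ (r l)) eq_ij.
  by rewrite /= !root_prod_XsubC !(mem_image r_inj).
rewrite /nb_irr_factors -(card_in_imset factor_inj); apply: eq_card => q; rewrite inE.
apply/imsetP/and3P => [[_ /imsetP[i _ ->] ->] | [q_monic /irreduciblebP q_irr q_dvd]].
  rewrite factorE orbit_minpoly_monic orbit_minpoly_dvdp_f; split=> //.
  exact/irreduciblebP/orbit_minpoly_irr.
have [i qi] := irreducible_dvdp_root q_irr q_dvd.
exists (porbit pi i); first exact: imset_f.
by apply: val_inj; rewrite factorE -(orbit_minpoly_unique q_monic q_irr qi).
Qed.

Definition root_vandermonde := \prod_(i < n) \prod_(j < n | (i < j)%N) (r j - r i).

Lemma root_vandermonde_neq0 : root_vandermonde != 0.
Proof.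
apply/prodf_neq0 => i _; apply/prodf_neq0 => j lt_ij.
by rewrite subr_eq0; apply: contraTneq lt_ij => /r_inj ->; rewrite ltnn.
Qed.

Lemma frob_root_vandermonde :
  frob root_vandermonde = (-1) ^+ odd_perm pi * root_vandermonde.
Proof.
pose V := Vandermonde n (\row_j r j).
have detE : \det V = root_vandermonde.
  by rewrite det_Vandermonde; apply: eq_bigr => i _; apply: eq_bigr => j _; rewrite !mxE.
have frobV : map_mx frob V = col_perm pi V.
  by apply/matrixP => i j; rewrite !mxE rmorphXn /= r_frob_perm.
by rewrite -detE -det_map_mx frobV col_permE det_mulmx det_perm odd_permV mulrC.
Qed.

Lemma frob_prod_horner (q : {poly F}) :
  frob (\prod_(i < n) q^%:A.[r i]) = \prod_(i < n) q^%:A.[r i].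
Proof.
rewrite rmorph_prod [RHS](reindex_inj (@perm_inj _ pi)) /=; apply: eq_bigr => i _.
by rewrite r_frob_perm -[in RHS]map_frob_alg horner_map.
Qed.

Lemma sqr_root_vandermonde : root_vandermonde ^+ 2 =
  (-1) ^+ 'C(n, 2) * \prod_(i < n) (((lead_coef f)^-1)%:A * (f^`())^%:A.[r i]).
Proof.
rewrite sqr_prod_sub_lt; congr (_ * _); apply: eq_bigr => i _.
have lcf_neq0 : lead_coef f != 0 by rewrite lead_coef_eq0.
rewrite -horner_deriv_prod_XsubC -deriv_map f_split derivZ hornerZ mulrA -!in_algE.
by rewrite -rmorphM mulVf // rmorph1 mul1r.
Qed.

Hypothesis two_neq0 : (2 : F) != 0.

Lemma odd_frob_perm : odd_perm pi = (frob root_vandermonde != root_vandermonde).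
Proof.
rewrite frob_root_vandermonde; case: (odd_perm pi); rewrite ?mul1r ?eqxx //.
rewrite mulN1r -subr_eq0 -opprD oppr_eq0 -mulr2n -mulr_natl mulf_eq0 negb_or.
by rewrite root_vandermonde_neq0 -(rmorph_nat (in_alg L)) fmorph_eq0 two_neq0.
Qed.

Lemma sign_nb_irr_factors (e : F) : root_vandermonde ^+ 2 = e%:A ->
  (-1) ^+ nb_irr_factors f = (-1) ^+ n * qchar e :> int.
Proof.
move=> De; have e_neq0 : e != 0.
  apply: contra_eqN De => /eqP ->; rewrite scale0r sqrf_eq0; exact: root_vandermonde_neq0.
rewrite qchar_sign_nonsquare // -(frob_fixed_sqrt De) -odd_frob_perm.
rewrite -signr_odd -card_porbits_frob_perm /odd_perm card_ord.
by rewrite -(signr_odd _ n) -signr_addb addbA addbb.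
Qed.

End FrobeniusPermutation.

Lemma separable_split (F : finFieldType) (f : {poly F}) : separable_poly f ->
  exists (L : fieldExtType F) (r : 'I_(size f).-1 -> L), injective r /\
    map_poly (in_alg L) f = (lead_coef f)%:A *: \prod_(i < (size f).-1) ('X - (r i)%:P).
Proof.
move=> sep_f; have [L [rs Drs _]] := FinSplittingFieldFor (separable_poly_neq0 sep_f).
have uniq_rs : uniq rs.
  by rewrite -separable_prod_XsubC -(eqp_separable Drs) separable_map.
have size_rs : size rs = (size f).-1.
  by rewrite -(size_map_poly (in_alg L) f) (eqp_size Drs) size_prod_XsubC.
exists L, (fun i => rs`_i); split=> [i j /eqP | ].
  by rewrite nth_uniq ?size_rs // => /eqP /val_inj.
rewrite (eqpfP Drs) (monicP (monic_prod_XsubC _ _ _)) divr1 lead_coef_map.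
by rewrite (big_nth 0) big_mkord size_rs.
Qed.

Lemma mobius_deriv_sqr (F : finFieldType) (f h : {poly F}) (c : F) :
  (2 : F) != 0 -> separable_poly f -> f^`() = c *: h ^+ 2 ->
  mobius f = (-1) ^+ (size f).-1 *
    qchar ((-1) ^+ 'C((size f).-1, 2) * (c / lead_coef f) ^+ (size f).-1).
Proof.
move=> two_neq0 sep_f df; have f_neq0 := separable_poly_neq0 sep_f.
have [L [r [r_inj f_split]]] := separable_split sep_f.
set n := (size f).-1 in r r_inj f_split *.
pose w := \prod_(i < n) (map_poly (in_alg L) h).[r i].
have /eqP : frob w = w := frob_prod_horner f_neq0 r_inj f_split h.
rewrite frob_fixed => /vlineP[u Dw].
have Dsqr : root_vandermonde r ^+ 2 = ((-1) ^+ 'C(n, 2) * (c / lead_coef f) ^+ n * u ^+ 2)%:A.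
  rewrite (sqr_root_vandermonde f_neq0 f_split) df map_polyZ rmorphXn /=.
  under eq_bigr do rewrite hornerZ horner_exp mulrA -!in_algE -rmorphM.
  rewrite big_split prodrXl -/w Dw prodr_const card_ord /= -[RHS]in_algE !rmorphM.
  by rewrite rmorph_sign !rmorphXn /= (mulrC c) expr2 !mulrA.
have u_neq0 : u != 0.
  apply: contra_eqN Dsqr => /eqP ->; rewrite expr0n mulr0 scale0r sqrf_eq0.
  exact: root_vandermonde_neq0.
rewrite mobius_separable // (sign_nb_irr_factors f_neq0 r_inj f_split two_neq0 Dsqr).
by rewrite qchar_mulr_sqr.
Qed.

Section PowerSum.
Variables (F : fieldType) (a b : F) (g1 g2 : {poly F}) (k : nat).
Let f := a *: g1 ^+ k + b *: ('X * g2 ^+ k).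

Lemma deriv_pow_sum : k%:R = 0 :> F -> f^`() = b *: g2 ^+ k.
Proof.
move=> k0; have k_mul0 (q : {poly F}) : q *+ k = 0.
  by rewrite -mulr_natr -polyC_natr k0 mulr0.
rewrite /f derivD !derivZ derivM derivX !deriv_exp !k_mul0.
by rewrite mul1r mulr0 addr0 scaler0 add0r.
Qed.

Lemma separable_pow_sum : a != 0 -> b != 0 -> (0 < k)%N -> k%:R = 0 :> F ->
  coprimep g1 g2 -> separable_poly f.
Proof.
move=> a_neq0 b_neq0 k_gt0 k0 cop12.
rewrite separable_poly.unlock deriv_pow_sum // coprimepZr //; apply: coprimep_expr.
have -> : f = (b *: ('X * g2 ^+ k.-1)) * g2 + a *: g1 ^+ k.
  by rewrite /f addrC -scalerAl -mulrA -exprSr prednK.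
by rewrite coprimep_sym coprimep_addl_mul coprimepZr // coprimep_expr // coprimep_sym.
Qed.

Lemma size_lead_coef_pow_sum_le : b != 0 -> g2 != 0 -> (size g1 <= size g2)%N ->
  size f = ((size g2).-1 * k).+2 /\ lead_coef f = b * lead_coef g2 ^+ k.
Proof.
move=> b_neq0 g2_neq0 le12.
have size_g2 : size (b *: ('X * g2 ^+ k)) = ((size g2).-1 * k).+2.
  rewrite mulrC scalerAl size_mulX ?size_scale_exp //.
  by rewrite scaler_eq0 negb_or b_neq0 expf_neq0.
have lt_g1 : (size (a *: g1 ^+ k) < size (b *: ('X * g2 ^+ k)))%N.
  rewrite size_g2 ltnS (leq_trans (size_scale_leq _ _)) //.
  rewrite (leq_trans (size_poly_exp_leq _ _)) // ltnS leq_mul2r.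
  by rewrite -!subn1 leq_sub2r ?orbT.
rewrite /f addrC size_polyDl // lead_coefDl // size_g2 lead_coefZ (mulrC 'X).
by rewrite lead_coefMX lead_coef_exp.
Qed.

Lemma size_lead_coef_pow_sum_gt : a != 0 -> (1 < k)%N -> (size g2 < size g1)%N ->
  size f = ((size g1).-1 * k).+1 /\ lead_coef f = a * lead_coef g1 ^+ k.
Proof.
move=> a_neq0 k_gt1 lt21.
have g1_neq0 : g1 != 0 by rewrite -size_poly_gt0 (leq_ltn_trans _ lt21).
have lt_g2 : (size (b *: ('X * g2 ^+ k)) < size (a *: g1 ^+ k))%N.
  rewrite size_scale_exp //; have [-> | g2_neq0] := eqVneq g2 0.
    by rewrite expr0n gtn_eqF ?(ltnW k_gt1) // mulr0 scaler0 size_poly0.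
  rewrite (leq_ltn_trans (size_scale_leq _ _)) // mulrC size_mulX ?expf_neq0 //.
  rewrite ltnS (leq_ltn_trans (size_poly_exp_leq _ _)) //.
  have lt21' : ((size g2).-1 < (size g1).-1)%N by rewrite -ltnS !prednK ?size_poly_gt0.
  apply: leq_trans (_ : ((size g2).-1.+1 * k <= (size g1).-1 * k)%N).
    by rewrite mulSnr -addn2 leq_add2l.
  by rewrite leq_mul2r lt21' orbT.
by rewrite /f size_polyDl // lead_coefDl // size_scale_exp // lead_coefZ lead_coef_exp.
Qed.

End PowerSum.

Theorem lemma3p5 (F : finFieldType) (p : nat) (hp : p \in [pchar F]) (hp2 : p != 2%N)
  (a b : F) (ha : a != 0) (hb : b != 0) (g1 g2 : {poly F})
  (hcop : coprimep g1 g2) (hnz : ~~ ((g1 == 0) && (g2 == 0))) :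
  mobius (a *: g1 ^+ (2 * p) + b *: ('X * g2 ^+ (2 * p))) =
  (if (size g1 <= size g2)%N then - qchar (-1 : F) ^+ (size g2).-1
   else qchar (-1 : F) ^+ (size g1).-1).
Proof.
have p_prime := pcharf_prime hp.
have p_odd : odd p by case/even_prime: p_prime hp2 => [->|].
have two_neq0 : (2 : F) != 0 by rewrite -(dvdn_pcharf hp) dvdn_prime2.
have twop_gt1 : (1 < 2 * p)%N by rewrite (leq_trans _ (leq_pmull _ _)) ?prime_gt1.
have twop_char : (2 * p)%:R = 0 :> F by rewrite natrM (pcharf0 hp) mulr0.
have dp_double d : (d * (2 * p) = (d * p).*2)%N by rewrite mulnCA mul2n.
set f := _ + _.
have sep : separable_poly f := separable_pow_sum ha hb (ltnW twop_gt1) twop_char hcop.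
have df : f^`() = b *: (g2 ^+ p) ^+ 2 by rewrite -exprM mulnC; apply: deriv_pow_sum.
rewrite (mobius_deriv_sqr two_neq0 sep df); case: leqP => [le12 | lt21].
  have g2_neq0 : g2 != 0.
    apply: contraNneq hnz => g20; move: le12.
    by rewrite g20 size_poly0 leqn0 size_poly_eq0 eqxx => ->.
  have [-> ->] := size_lead_coef_pow_sum_le a (2 * p) hb g2_neq0 le12.
  rewrite /= dp_double invfM mulrA divff // mul1r -exprVn (mulnC 2) exprM (exprAC _ 2).
  rewrite qchar_bin2_sqr ?expf_neq0 ?invr_eq0 ?lead_coef_eq0 //= uphalf_double.
  by rewrite qchar_sign_muln_odd // exprS -signr_odd odd_double mulr1 mulN1r.
have [-> ->] := size_lead_coef_pow_sum_gt b ha twop_gt1 lt21.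
have lc1_neq0 : lead_coef g1 != 0.
  by rewrite lead_coef_eq0 -size_poly_gt0 (leq_ltn_trans _ lt21).
rewrite /= dp_double; set m := (_ * p)%N.
rewrite -muln2 !(exprM _ m 2) sqrr_sign mul1r qchar_bin2_sqr.
  by rewrite muln2 doubleK qchar_sign_muln_odd.
by rewrite expf_neq0 // mulf_neq0 // invr_eq0 mulf_neq0 // expf_neq0.
Qed.
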